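(* Let $X,Y$ be countable discrete metric spaces and $d\in D(X,Y)$. Suppose $M_d(X,Y)$ is full as a Hilbert $C^*_u(X)$-module, i.e. the linear span of $\{T^*\circ S: T,S\in M_d(X,Y)\}$ is norm dense in $C^*_u(X)$. Then there exist $L>0$ and a map $f:X\to Y$ such that $d(x,f(x))\le L$ for all $x\in X$.
   Context: $H_X=l^2(X)$ with basis $\{\delta_x\}$. $D(X,Y)$ is the set of metrics on $X\sqcup Y$ restricting to $d_X$ and $d_Y$. For $T:H_X\to H_Y$ bounded, $T_{yx}=\langle T\delta_x,\delta_y\rangle$; $T$ has propagation less than $L$ w.r.t. $d$ if $T_{yx}=0$ whenever $d(x,y)\ge L$. $M_d(X,Y)$ is the norm closure of the bounded finite-propagation operators $H_X\to H_Y$. $C^*_u(X)$ is the norm closure of the bounded operators on $H_X$ of finite propagation w.r.t. $d_X$ (uniform Roe algebra). *)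

From Stdlib Require Import Reals List.
Import ListNotations.
Open Scope R_scope.

Record C := mkC { Cre : R ; Cim : R }.
Definition C0 : C := mkC 0 0.
Definition Cadd (a b : C) : C := mkC (Cre a + Cre b) (Cim a + Cim b).
Definition Copp (a : C) : C := mkC (- Cre a) (- Cim a).
Definition Csub (a b : C) : C := Cadd a (Copp b).
Definition Cmul (a b : C) : C :=
  mkC (Cre a * Cre b - Cim a * Cim b) (Cre a * Cim b + Cim a * Cre b).
Definition Cconj (a : C) : C := mkC (Cre a) (- Cim a).
Definition Cnorm2 (a : C) : R := Cre a * Cre a + Cim a * Cim a.
Definition Cabs (a : C) : R := sqrt (Cnorm2 a).

Definition lsumC {I : Type} (g : I -> C) (l : list I) : C :=
  fold_right (fun i acc => Cadd (g i) acc) C0 l.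
Definition lsumR {I : Type} (g : I -> R) (l : list I) : R :=
  fold_right (fun i acc => g i + acc) 0 l.

(* unconditional summability of a family indexed by I, with sum c
   (limit of the net of finite partial sums) *)
Definition has_sum {I : Type} (g : I -> C) (c : C) : Prop :=
  forall eps, 0 < eps -> exists G0 : list I,
    forall G : list I, NoDup G -> incl G0 G -> Cabs (Csub (lsumC g G) c) < eps.

Definition is_metric {A : Type} (d : A -> A -> R) : Prop :=
  (forall a b, 0 <= d a b) /\
  (forall a b, d a b = 0 <-> a = b) /\
  (forall a b, d a b = d b a) /\
  (forall a b c, d a c <= d a b + d b c).

Definition countable (A : Type) : Prop :=
  exists e : A -> nat, forall a b, e a = e b -> a = b.

Definition discrete_metric {A : Type} (d : A -> A -> R) : Prop :=
  forall a, exists eps, 0 < eps /\ forall b, d a b < eps -> b = a.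

Definition in_D {X Y : Type} (dX : X -> X -> R) (dY : Y -> Y -> R)
  (d : (X + Y) -> (X + Y) -> R) : Prop :=
  is_metric d /\
  (forall a b, d (inl a) (inl b) = dX a b) /\
  (forall a b, d (inr a) (inr b) = dY a b).

(* ---------- operators as matrices ----------
   An operator T : l^2(A) -> l^2(B) is represented by its matrix
   M b a = <T delta_a, delta_b>. *)
Definition Mat (A B : Type) := B -> A -> C.

(* ||M|| <= r : tested on finitely supported vectors and finitely many
   output coordinates (this is exactly the operator norm bound). *)
Definition opnorm_le {A B : Type} (M : Mat A B) (r : R) : Prop :=
  0 <= r /\
  forall (F : list A) (G : list B) (v : A -> C),
    NoDup F -> NoDup G ->
    lsumR (fun a => Cnorm2 (v a)) F <= 1 ->
    lsumR (fun b => Cnorm2 (lsumC (fun a => Cmul (M b a) (v a)) F)) G <= r * r.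

Definition bounded {A B : Type} (M : Mat A B) : Prop := exists r, opnorm_le M r.

Definition Msub {A B : Type} (M N : Mat A B) : Mat A B := fun b a => Csub (M b a) (N b a).

Definition prop_lt {A B : Type} (dist : A -> B -> R) (M : Mat A B) (L : R) : Prop :=
  forall a b, L <= dist a b -> M b a = C0.

Definition finite_prop {A B : Type} (dist : A -> B -> R) (M : Mat A B) : Prop :=
  exists L, prop_lt dist M L.

Definition in_closure_fp {A B : Type} (dist : A -> B -> R) (M : Mat A B) : Prop :=
  bounded M /\
  forall eps, 0 < eps -> exists N : Mat A B,
    bounded N /\ finite_prop dist N /\ opnorm_le (Msub M N) eps.

Definition in_Md {X Y : Type} (d : (X + Y) -> (X + Y) -> R) (T : Mat X Y) : Prop :=
  in_closure_fp (fun x y => d (inl x) (inr y)) T.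

Definition in_Cu {X : Type} (dX : X -> X -> R) (A : Mat X X) : Prop :=
  in_closure_fp dX A.

Definition is_adj_comp {X Y : Type} (T S : Mat X Y) (P : Mat X X) : Prop :=
  forall x' x, has_sum (fun y => Cmul (Cconj (T y x')) (S y x)) (P x' x).

Definition in_span_adj_comp {X Y : Type} (d : (X + Y) -> (X + Y) -> R)
  (B : Mat X X) : Prop :=
  exists l : list (C * Mat X Y * Mat X Y * Mat X X),
    (forall c T S P, In (c, T, S, P) l -> in_Md d T /\ in_Md d S /\ is_adj_comp T S P) /\
    forall x' x, B x' x = lsumC (fun t => let '(c, _, _, P) := t in Cmul c (P x' x)) l.

Definition full_module {X Y : Type} (dX : X -> X -> R)
  (d : (X + Y) -> (X + Y) -> R) : Prop :=
  forall A : Mat X X, in_Cu dX A ->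
  forall eps, 0 < eps -> exists B, in_span_adj_comp d B /\ opnorm_le (Msub A B) eps.

(* Fullness lets us approximate the identity of l^2(X) within 1/2 by a finite
   combination B = sum_i c_i T_i^* S_i with T_i, S_i in M_d(X,Y).  Each T_i is
   within eps of an operator N_i of propagation < L_i; take L = max_i L_i.
   If a point x were at distance >= L from every y in Y, the column x of every
   N_i would vanish, so the column x of T_i would have l^2-norm <= eps, and by
   a Cauchy-Schwarz estimate |(T_i^* S_i)_{xx}| <= eps * ||S_i||.  Choosing eps
   small forces |B_{xx}| <= 1/4, whereas ||1 - B|| <= 1/2 forces |B_{xx}| >= 1/2.
   Hence every x has some f(x) in Y with d(x, f(x)) <= L. *)
From Pilot Require Import Defs.
From Stdlib Require Import Reals List Lra Psatz Classical ClassicalEpsilon.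
From Coquelicot Require Complex.
Import ListNotations.
Open Scope R_scope.

(* The modulus [Cabs] agrees with Coquelicot's [Cmod], whose triangle and
   multiplicativity laws we reuse. *)
Definition toC (a : Defs.C) : Complex.C := (Cre a, Cim a).

Lemma Cabs_toC (a : Defs.C) : Cabs a = Complex.Cmod (toC a).
Proof. unfold Cabs, Complex.Cmod, Cnorm2, toC; simpl. f_equal; ring. Qed.

Lemma Cabs_add (a b : Defs.C) : Cabs (Cadd a b) <= Cabs a + Cabs b.
Proof. rewrite !Cabs_toC. exact (Complex.Cmod_triangle (toC a) (toC b)). Qed.

Lemma Cabs_mul (a b : Defs.C) : Cabs (Cmul a b) = Cabs a * Cabs b.
Proof. rewrite !Cabs_toC. exact (Complex.Cmod_mult (toC a) (toC b)). Qed.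

Lemma Cabs_conj (a : Defs.C) : Cabs (Cconj a) = Cabs a.
Proof. unfold Cabs, Cnorm2, Cconj; simpl. f_equal; ring. Qed.

Lemma Cabs_opp (a : Defs.C) : Cabs (Copp a) = Cabs a.
Proof. unfold Cabs, Cnorm2, Copp; simpl. f_equal; ring. Qed.

Lemma Cnorm2_ge0 (a : Defs.C) : 0 <= Cnorm2 a.
Proof. unfold Cnorm2; nra. Qed.

Lemma Cabs_ge0 (a : Defs.C) : 0 <= Cabs a.
Proof. apply sqrt_pos. Qed.

Lemma Cabs_sq (a : Defs.C) : Cabs a * Cabs a = Cnorm2 a.
Proof. apply sqrt_sqrt, Cnorm2_ge0. Qed.

Lemma Cabs_le_of_norm2 (a : Defs.C) (r : R) : 0 <= r -> Cnorm2 a <= r * r -> Cabs a <= r.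
Proof. intros Hr H. pose proof (Cabs_sq a). pose proof (Cabs_ge0 a). nra. Qed.

(* Weighted arithmetic-geometric mean bound |conj(a) b| <= (t|a|^2 + |b|^2/t)/2,
   the termwise form of Cauchy-Schwarz. *)
Lemma Cabs_conj_mul_amgm (a b : Defs.C) (t : R) : 0 < t ->
  Cabs (Cmul (Cconj a) b) <= (t * Cnorm2 a + Cnorm2 b / t) / 2.
Proof.
  intros Ht. rewrite Cabs_mul, Cabs_conj, <- !Cabs_sq.
  pose proof (Cabs_ge0 a); pose proof (Cabs_ge0 b).
  set (p := Cabs a) in *; set (q := Cabs b) in *.
  pose proof (Rle_0_sqr (t * p - q)) as Hsq. unfold Rsqr in Hsq.
  apply Rmult_le_reg_l with (2 * t); [lra|].
  replace (2 * t * ((t * (p * p) + q * q / t) / 2)) with (t * t * (p * p) + q * q)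
    by (field; lra).
  nra.
Qed.

Lemma lsumC_abs {I : Type} (g : I -> Defs.C) (l : list I) :
  Cabs (lsumC g l) <= lsumR (fun i => Cabs (g i)) l.
Proof.
  induction l as [|i l IH]; simpl.
  - unfold Cabs, Cnorm2; simpl. rewrite Rmult_0_l, Rplus_0_l, sqrt_0; lra.
  - eapply Rle_trans; [apply Cabs_add|]. lra.
Qed.

Lemma lsumC_zero_in {I : Type} (g : I -> Defs.C) (l : list I) :
  (forall i, In i l -> g i = C0) -> lsumC g l = C0.
Proof.
  induction l as [|i l IH]; simpl; intros H; auto.
  rewrite H, IH by auto. unfold Cadd, C0; simpl. f_equal; ring.
Qed.

Lemma lsumR_le {I : Type} (f g : I -> R) (l : list I) :
  (forall i, In i l -> f i <= g i) -> lsumR f l <= lsumR g l.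
Proof.
  induction l as [|i l IH]; simpl; intros H; [lra|].
  pose proof (H i (or_introl eq_refl)).
  assert (lsumR f l <= lsumR g l) by (apply IH; auto). lra.
Qed.

Lemma lsumR_ext {I : Type} (f g : I -> R) (l : list I) :
  (forall i, f i = g i) -> lsumR f l = lsumR g l.
Proof. intros H; induction l; simpl; [lra|]. rewrite H, IHl; lra. Qed.

Lemma lsumR_zero {I : Type} (l : list I) : lsumR (fun _ => 0) l = 0.
Proof. induction l; simpl; lra. Qed.

Lemma lsumR_plus {I : Type} (f g : I -> R) (l : list I) :
  lsumR (fun i => f i + g i) l = lsumR f l + lsumR g l.
Proof. induction l; simpl; [lra|]. rewrite IHl; lra. Qed.

Lemma lsumR_scal {I : Type} (f : I -> R) (k : R) (l : list I) :
  lsumR (fun i => k * f i) l = k * lsumR f l.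
Proof. induction l; simpl; [lra|]. rewrite IHl; lra. Qed.

Lemma lsumR_ge0 {I : Type} (f : I -> R) (l : list I) :
  (forall i, 0 <= f i) -> 0 <= lsumR f l.
Proof. intros H; induction l; simpl; [lra|]. specialize (H a). lra. Qed.

Lemma lsumR_spike {A : Type} (a0 : A) (c : R) (G : list A) : 0 <= c -> NoDup G ->
  lsumR (fun b => if excluded_middle_informative (b = a0) then c else 0) G <= c.
Proof.
  intros Hc HG. induction HG as [|b G Hn HG IH]; simpl; [lra|].
  destruct (excluded_middle_informative (b = a0)) as [->|]; [|lra].
  assert (Hrest : lsumR (fun b => if excluded_middle_informative (b = a0) then c else 0) G
                  <= lsumR (fun _ => 0) G).
  { apply lsumR_le. intros b Hb.
    destruct (excluded_middle_informative (b = a0)) as [->|]; [contradiction|lra]. }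
  rewrite lsumR_zero in Hrest. lra.
Qed.

Lemma list_uniform {A : Type} (l : list A) (Q : A -> R -> Prop) :
  (forall a r r', r <= r' -> Q a r -> Q a r') ->
  (forall a, In a l -> exists r, Q a r) ->
  exists r0, 0 < r0 /\ forall a, In a l -> Q a r0.
Proof.
  intros Hm. induction l as [|a l IH]; intros Hex.
  - exists 1; split; [lra|]. intros a [].
  - destruct IH as [r0 [Hr0 H0]]. { intros b Hb; apply Hex; right; auto. }
    destruct (Hex a (or_introl eq_refl)) as [r Hr].
    exists (Rmax r0 r). split; [eapply Rlt_le_trans; [apply Hr0|apply Rmax_l]|].
    intros b [<-|Hb]; [eapply Hm; [apply Rmax_r|auto]|eapply Hm; [apply Rmax_l|auto]].
Qed.

Definition C1 : Defs.C := mkC 1 0.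

Lemma Cabs_C1 : Cabs C1 = 1.
Proof. unfold Cabs, Cnorm2, C1; simpl. replace (1 * 1 + 0 * 0) with 1 by ring. apply sqrt_1. Qed.

Lemma opnorm_col {A B : Type} (M : Mat A B) (r : R) (a : A) (G : list B) :
  opnorm_le M r -> NoDup G -> lsumR (fun b => Cnorm2 (M b a)) G <= r * r.
Proof.
  intros [Hr H] HG.
  specialize (H [a] G (fun _ => C1) (NoDup_cons _ (@in_nil _ _) (NoDup_nil _)) HG).
  rewrite (lsumR_ext _ (fun b => Cnorm2 (lsumC (fun a' => Cmul (M b a') C1) [a]))).
  - apply H. unfold lsumR, Cnorm2, C1; simpl; lra.
  - intros b; unfold lsumC, Cnorm2, C1, Cmul, Cadd, C0; simpl. ring.
Qed.

Lemma opnorm_entry {A B : Type} (M : Mat A B) (r : R) (a : A) (b : B) :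
  opnorm_le M r -> Cabs (M b a) <= r.
Proof.
  intros H. pose proof (opnorm_col M r a [b] H (NoDup_cons _ (@in_nil _ _) (NoDup_nil _))).
  destruct H as [Hr _]. simpl in H0. apply Cabs_le_of_norm2; [auto|lra].
Qed.

Lemma opnorm_mono {A B : Type} (M : Mat A B) (r r' : R) :
  opnorm_le M r -> r <= r' -> opnorm_le M r'.
Proof.
  intros [Hr H] Hle. split; [lra|]. intros F G v HF HG Hv.
  eapply Rle_trans; [apply H; auto|]. nra.
Qed.

Lemma opnorm_zero {A B : Type} (M : Mat A B) (r : R) :
  0 <= r -> (forall b a, M b a = C0) -> opnorm_le M r.
Proof.
  intros Hr H. split; auto. intros F G v _ _ _.
  rewrite (lsumR_ext _ (fun _ => 0)), lsumR_zero; [nra|].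
  intros b. rewrite lsumC_zero_in; [unfold Cnorm2, C0; simpl; ring|].
  intros a _. rewrite H. unfold Cmul, C0; simpl. f_equal; ring.
Qed.

Definition Id {A : Type} : Mat A A := fun b a =>
  if excluded_middle_informative (b = a) then C1 else C0.

Lemma Id_contraction {A : Type} (v : A -> Defs.C) (F G : list A) : NoDup F -> NoDup G ->
  lsumR (fun b => Cnorm2 (lsumC (fun a => Cmul (Id b a) (v a)) F)) G
  <= lsumR (fun a => Cnorm2 (v a)) F.
Proof.
  intros HF HG. induction HF as [|a0 F Hn HF IH].
  - simpl. rewrite (lsumR_ext _ (fun _ => 0)), lsumR_zero; [lra|].
    intros; unfold Cnorm2, C0; simpl; ring.
  - simpl.
    rewrite (lsumR_ext _ (fun b =>
        (if excluded_middle_informative (b = a0) then Cnorm2 (v a0) else 0)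
        + Cnorm2 (lsumC (fun a => Cmul (Id b a) (v a)) F))).
    + rewrite lsumR_plus. pose proof (lsumR_spike a0 (Cnorm2 (v a0)) G (Cnorm2_ge0 _) HG).
      lra.
    + intros b. unfold Id at 1.
      destruct (excluded_middle_informative (b = a0)) as [->|].
      * assert (Hcol : lsumC (fun a => Cmul (Id a0 a) (v a)) F = C0).
        { apply lsumC_zero_in. intros a Ha. unfold Id.
          destruct (excluded_middle_informative (a0 = a)) as [->|]; [contradiction|].
          unfold Cmul, C0; simpl; f_equal; ring. }
        rewrite Hcol. unfold Cnorm2, Cadd, Cmul, C1, C0; simpl; ring.
      * unfold Cnorm2, Cadd, Cmul, C0; simpl; ring.
Qed.

Lemma Id_opnorm {A : Type} : opnorm_le (@Id A) 1.
Proof.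
  split; [lra|]. intros F G v HF HG Hv.
  eapply Rle_trans; [apply Id_contraction; auto|]. lra.
Qed.

(* The identity has propagation 0, hence lies in the uniform Roe algebra. *)
Lemma Id_Cu {A : Type} (dA : A -> A -> R) : is_metric dA -> in_Cu dA (@Id A).
Proof.
  intros (_ & Hdist0 & _). split; [exists 1; apply Id_opnorm|].
  intros eps Heps. exists Id. split; [exists 1; apply Id_opnorm|]. split.
  - exists 1. intros a b Hab. unfold Id.
    destruct (excluded_middle_informative (b = a)) as [->|]; auto.
    assert (dA a a = 0) by (apply Hdist0; auto). lra.
  - apply opnorm_zero; [lra|]. intros b a.
    unfold Msub, Csub, Cadd, Copp, C0; simpl. f_equal; ring.
Qed.

Lemma has_sum_bound {I : Type} (g : I -> Defs.C) (c : Defs.C) (b : R) : has_sum g c ->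
  (forall G, NoDup G -> lsumR (fun i => Cabs (g i)) G <= b) -> Cabs c <= b.
Proof.
  intros Hs Hb. apply Rnot_lt_le; intros Hlt.
  destruct (Hs ((Cabs c - b) / 2)) as [G0 HG0]; [lra|].
  set (G := nodup (fun a b => excluded_middle_informative (a = b)) G0).
  specialize (HG0 G (NoDup_nodup _ _) (fun a Ha => proj2 (nodup_In _ _ _) Ha)).
  specialize (Hb G (NoDup_nodup _ _)).
  pose proof (lsumC_abs g G).
  assert (E : c = Cadd (lsumC g G) (Copp (Csub (lsumC g G) c))).
  { destruct c, (lsumC g G); unfold Cadd, Copp, Csub; simpl; f_equal; ring. }
  pose proof (Cabs_add (lsumC g G) (Copp (Csub (lsumC g G) c))) as Htri.
  rewrite <- E, Cabs_opp in Htri. lra.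
Qed.

Lemma adj_comp_diag_bound {X Y : Type} (T S : Mat X Y) (P : Mat X X) (x : X) (e r : R) :
  is_adj_comp T S P -> 0 < e -> 0 < r ->
  (forall G, NoDup G -> lsumR (fun y => Cnorm2 (T y x)) G <= e * e) ->
  (forall G, NoDup G -> lsumR (fun y => Cnorm2 (S y x)) G <= r * r) ->
  Cabs (P x x) <= e * r.
Proof.
  intros HP He Hr HT HS. apply (has_sum_bound _ _ _ (HP x x)). intros G HG.
  set (t := r / e).
  assert (Ht : 0 < t) by (apply Rdiv_lt_0_compat; auto).
  eapply Rle_trans; [apply lsumR_le; intros y _; apply (Cabs_conj_mul_amgm _ _ t Ht)|].
  rewrite (lsumR_ext _ (fun y => (t / 2) * Cnorm2 (T y x) + (/ t / 2) * Cnorm2 (S y x)))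
    by (intros y; field; lra).
  rewrite lsumR_plus, !lsumR_scal.
  specialize (HT G HG). specialize (HS G HG).
  pose proof (Rinv_0_lt_compat t Ht).
  assert (t / 2 * lsumR (fun y => Cnorm2 (T y x)) G <= t / 2 * (e * e)) by
    (apply Rmult_le_compat_l; lra).
  assert (/ t / 2 * lsumR (fun y => Cnorm2 (S y x)) G <= / t / 2 * (r * r)) by
    (apply Rmult_le_compat_l; lra).
  replace (e * r) with (t / 2 * (e * e) + / t / 2 * (r * r)) by (unfold t; field; lra).
  lra.
Qed.

Section FarFromY.

Variables (X Y : Type) (d : (X + Y) -> (X + Y) -> R).

Definition far_from_Y (L : R) (x : X) : Prop := forall y, L <= d (inl x) (inr y).

(* If T is eps-close to an operator of propagation < L, its column at a point
   L-far from Y has norm <= eps; hence |(T^* S)_{xx}| <= eps * ||S||. *)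
Lemma adj_comp_diag_far (T S N : Mat X Y) (P : Mat X X) (x : X) (eps r L : R) :
  is_adj_comp T S P -> 0 < eps -> 0 < r -> opnorm_le S r ->
  prop_lt (fun x y => d (inl x) (inr y)) N L -> opnorm_le (Msub T N) eps ->
  far_from_Y L x -> Cabs (P x x) <= eps * r.
Proof.
  intros HP Heps Hr HS HN HTN Hfar.
  apply (adj_comp_diag_bound T S P x eps r HP Heps Hr).
  - intros G HG. rewrite (lsumR_ext _ (fun y => Cnorm2 (Msub T N y x))).
    + apply opnorm_col; auto.
    + intros y. unfold Msub. rewrite (HN x y (Hfar y)).
      unfold Cnorm2, Csub, Cadd, Copp, C0; simpl; ring.
  - intros G HG. apply opnorm_col; auto.
Qed.

Lemma span_diag_small_far (B : Mat X X) (delta : R) :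
  in_span_adj_comp d B -> 0 < delta ->
  exists L, 0 < L /\ forall x, far_from_Y L x -> Cabs (B x x) <= delta.
Proof.
  intros [l [Hl HB]] Hdelta.
  destruct (list_uniform l (fun t r => opnorm_le (snd (fst t)) r)) as [R0 [HR0 HRl]].
  { intros t r r' Hle H; eapply opnorm_mono; eauto. }
  { intros [[[c T] S] P] Ht. destruct (Hl _ _ _ _ Ht) as [_ [[[r Hr] _] _]]. now exists r. }
  set (K := lsumR (fun t => Cabs (fst (fst (fst t)))) l).
  assert (HK : 0 <= K) by (apply lsumR_ge0; intros; apply Cabs_ge0).
  set (eps := delta / ((1 + K) * R0)).
  assert (Heps : 0 < eps) by (apply Rdiv_lt_0_compat; [lra|nra]).
  destruct (list_uniform l (fun t L => exists N,
      prop_lt (fun x y => d (inl x) (inr y)) N L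
      /\ opnorm_le (Msub (snd (fst (fst t))) N) eps)) as [L [HL HLl]].
  { intros t r r' Hle [N [HN1 HN2]]. exists N; split; auto.
    intros a b Hab. apply HN1. lra. }
  { intros [[[c T] S] P] Ht. destruct (Hl _ _ _ _ Ht) as [[_ HT] _].
    destruct (HT eps Heps) as [N [_ [[L HN] HN2]]]. now exists L, N. }
  exists L. split; auto. intros x Hfar.
  rewrite HB. eapply Rle_trans; [apply lsumC_abs|].
  apply Rle_trans with (K * (eps * R0)).
  - unfold K. rewrite Rmult_comm, <- lsumR_scal. apply lsumR_le.
    intros [[[c T] S] P] Ht. simpl. rewrite Cabs_mul, (Rmult_comm _ (Cabs c)).
    apply Rmult_le_compat_l; [apply Cabs_ge0|].
    destruct (Hl _ _ _ _ Ht) as [_ [_ HP]].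
    destruct (HLl _ Ht) as [N [HN1 HN2]].
    exact (adj_comp_diag_far T S N P x eps R0 L HP Heps HR0 (HRl _ Ht) HN1 HN2 Hfar).
  - replace (K * (eps * R0)) with (delta * (K / (1 + K))) by (unfold eps; field; lra).
    assert (K / (1 + K) <= 1) by (apply Rmult_le_reg_r with (1 + K); [lra|];
      unfold Rdiv; rewrite Rmult_assoc, Rinv_l; lra).
    nra.
Qed.

End FarFromY.

Lemma near_Id_diag {A : Type} (B : Mat A A) (a : A) :
  opnorm_le (Msub Id B) (1 / 2) -> 1 / 2 <= Cabs (B a a).
Proof.
  intros Hnorm. pose proof (opnorm_entry _ _ a a Hnorm) as He. unfold Msub in He.
  replace (Id a a) with C1 in He
    by (unfold Id; destruct (excluded_middle_informative (a = a)); tauto).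
  pose proof (Cabs_add (Csub C1 (B a a)) (B a a)) as Htri.
  replace (Cadd (Csub C1 (B a a)) (B a a)) with C1 in Htri
    by (destruct (B a a); unfold Cadd, Csub, Copp, C1; simpl; f_equal; ring).
  rewrite Cabs_C1 in Htri. lra.
Qed.

Theorem mainTheorem3 (X Y : Type) (dX : X -> X -> R) (dY : Y -> Y -> R)
  (hXc : countable X) (hYc : countable Y)
  (hXm : is_metric dX) (hYm : is_metric dY)
  (hXd : discrete_metric dX) (hYd : discrete_metric dY)
  (d : (X + Y) -> (X + Y) -> R) (hd : in_D dX dY d)
  (hfull : full_module dX d) :
  exists L : R, 0 < L /\ exists f : X -> Y, forall x, d (inl x) (inr (f x)) <= L.
Proof.
  destruct (hfull Id (Id_Cu dX hXm) (1 / 2)) as [B [HBspan HBnorm]]; [lra|].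
  destruct (span_diag_small_far X Y d B (1 / 4) HBspan) as [L [HL Hsmall]]; [lra|].
  assert (Hnear : forall x, exists y, d (inl x) (inr y) <= L).
  { intros x. apply NNPP; intros Hnone.
    assert (Hfar : far_from_Y X Y d L x).
    { intros y. apply Rnot_lt_le; intros Hlt. apply Hnone. exists y; lra. }
    pose proof (Hsmall x Hfar). pose proof (near_Id_diag B x HBnorm). lra. }
  exists L. split; [exact HL|].
  exists (fun x => proj1_sig (constructive_indefinite_description _ (Hnear x))).
  intros x. exact (proj2_sig (constructive_indefinite_description _ (Hnear x))).
Qed.
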